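(* Let $(G,\prec)$ be a POP-graph and let $v$ be an internal vertex of $G$ that is maximal, i.e. there is no internal vertex $v'\neq v$ with $v\to v'$. Then (1) $O(v)\subseteq O(G)$ and $O(v)$ is an interval of $(E(G),\prec)$; in particular $O(v)$ is an interval of $(O(G),\prec)$. (2) For every $h\in I(v)$ and $o\in O(G)\setminus O(v)$: $o\prec h$ iff $o\prec\min O(v)$, and $h\prec o$ iff $\max O(v)\prec o$.
   Context: A progressive graph is a finite directed acyclic graph (parallel edges allowed) in which every source and every sink has degree one; degree-one vertices are boundary vertices, the others internal. $O(G)$ is the set of output edges (edges whose terminal vertex is a boundary vertex). For a vertex $v$, $I(v)$ and $O(v)$ are its incoming and outgoing edges. For edges write $e\to e'$ if $e\neq e'$ and there is a directed path whose first edge is $e$ and last edge is $e'$; for vertices $v\to v'$ means there is a directed path from $v$ to $v'$. A planar order on $G$ is a linear order $\prec$ on $E(G)$ such that (P1) $e_1\to e_2$ implies $e_1\prec e_2$; (P2) if $e_1\prec e_2\prec e_3$ and $e_1\to e_3$ then $e_1\to e_2$ or $e_2\to e_3$. A POP-graph is a progressive graph with a planar order. An interval of a linearly ordered set $(S,\prec)$ is a subset of the form $\{s: a\preceq s\preceq b\}$. *)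

From mathcomp Require Import all_boot.
Set Implicit Arguments. Unset Strict Implicit. Unset Printing Implicit Defensive.

(* A finite directed multigraph: vertex type V, edge type E, each edge e goes
   from (src e) to (tgt e). Parallel edges are allowed. *)
Section Graph.
Variables (V E : finType) (src tgt : E -> V).

Definition vadj : rel V := fun a b => [exists e, (src e == a) && (tgt e == b)].
Definition vreach (a b : V) : bool := connect vadj a b.

Definition esucc : rel E := fun e f => tgt e == src f.
Definition epath (e f : E) : bool := (e != f) && connect esucc e f.

Definition in_edges (v : V) : {set E} := [set e | tgt e == v].
Definition out_edges (v : V) : {set E} := [set e | src e == v].
Definition degree (v : V) : nat := #|in_edges v| + #|out_edges v|.

Definition is_source (v : V) : bool := #|in_edges v| == 0.
Definition is_sink (v : V) : bool := #|out_edges v| == 0.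

Definition boundary (v : V) : bool := degree v == 1.
Definition internal (v : V) : bool := ~~ boundary v.

Definition acyclic : Prop := forall e : E, ~~ vreach (tgt e) (src e).

Definition progressive : Prop :=
  [/\ acyclic,
      forall v, is_source v -> degree v = 1 &
      forall v, is_sink v -> degree v = 1].

Definition output_edges : {set E} := [set e | boundary (tgt e)].

Definition strict_linear (prec : rel E) : Prop :=
  [/\ irreflexive prec, transitive prec &
      forall e f, e != f -> prec e f || prec f e].

Definition planar_order (prec : rel E) : Prop :=
  [/\ strict_linear prec,
      forall e1 e2, epath e1 e2 -> prec e1 e2 &
      forall e1 e2 e3, prec e1 e2 -> prec e2 e3 -> epath e1 e3 ->
                   epath e1 e2 \/ epath e2 e3].

Definition pleq (prec : rel E) (e f : E) : bool := (e == f) || prec e f.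

Definition is_interval_in (prec : rel E) (T S : {set E}) : Prop :=
  exists a b, [/\ a \in T, b \in T &
    forall s, s \in T -> (s \in S <-> pleq prec a s && pleq prec s b)].

End Graph.

From Pilot Require Import Defs.
From mathcomp Require Import all_boot.
From mathcomp Require Import zify.

Set Implicit Arguments. Unset Strict Implicit. Unset Printing Implicit Defensive.

(* Maximality of v forces every edge leaving v to end at a boundary vertex, so
   O(v) is contained in O(G) and a directed path starting in I(v) stops after
   one edge, in O(v).  Fix h in I(v); by (P1) h precedes O(v).  If
   min O(v) < s < max O(v), then (P2) applied to h < s < max O(v) gives either
   h -> s, so s lies in O(v), or s -> max O(v); in the latter case the last
   edge of that path also enters v, so s -> min O(v), against (P1).  Part (2)
   is the same use of (P2): an output edge o outside O(v) has no path h -> o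
   and no path leaving it, so it cannot sit strictly between h and an edge of
   O(v). *)

Lemma connect_neq_first (T : finType) (r : rel T) x y :
  connect r x y -> x != y -> exists2 z, r x z & connect r z y.
Proof.
move=> /connectP [[|z p] /= rxp ->]; first by rewrite eqxx.
by case/andP: rxp => rxz rzp _; exists z => //; apply/connectP; exists p.
Qed.

Lemma connect_neq_last (T : finType) (r : rel T) x y :
  connect r x y -> x != y -> exists2 z, connect r x z & r z y.
Proof.
move=> /connectP [p rxp ->]; elim/last_ind: p rxp => [|q z _]; first by rewrite eqxx.
rewrite rcons_path last_rcons => /andP[rxq rz] _.
by exists (last x q) => //; apply/connectP; exists q.
Qed.

Lemma strict_linear_min (T : finType) (prec : rel T) (S : {set T}) x :
  strict_linear prec -> x \in S ->
  exists2 m, m \in S & forall e, e \in S -> pleq prec m e.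
Proof.
case=> irr tr tot Sx.
pose rank e := #|[set f | prec f e]|.
have rank_lt a b : prec a b -> rank a < rank b.
  move=> ab; apply: proper_card; apply/properP; split.
    by apply/subsetP => f; rewrite !inE => fa; apply: tr fa ab.
  by exists a; rewrite !inE ?ab ?irr.
case: (arg_minnP rank Sx) => m Sm min_m; exists m => // e Se.
rewrite /pleq; case: eqVneq => //= ne_me; case/orP: (tot _ _ ne_me) => // em.
by have := min_m e Se; rewrite leqNgt rank_lt.
Qed.

Lemma strict_linear_max (T : finType) (prec : rel T) (S : {set T}) x :
  strict_linear prec -> x \in S ->
  exists2 M, M \in S & forall e, e \in S -> pleq prec e M.
Proof.
case=> irr tr tot Sx.
have lin_flip : strict_linear (fun a b => prec b a).
  by split=> // [a b c ba cb | a b ne_ab]; [apply: tr cb ba | rewrite orbC tot].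
case: (strict_linear_min lin_flip Sx) => M SM max_M; exists M => // e Se.
by rewrite /pleq eq_sym; apply: max_M.
Qed.

Section POPGraph.

Variables (V E : finType) (src tgt : E -> V).

Local Notation vreach := (vreach src tgt).
Local Notation esucc := (esucc src tgt).
Local Notation epath := (epath src tgt).
Local Notation in_edges := (in_edges tgt).
Local Notation out_edges := (out_edges src).
Local Notation boundary := (boundary src tgt).
Local Notation internal := (internal src tgt).
Local Notation output_edges := (output_edges src tgt).

Lemma epath_retarget s f g : epath s f -> src f = src g -> s != g -> epath s g.
Proof.
case/andP=> ne_sf /connect_neq_last/(_ ne_sf) [z sz /eqP zf] fg ne_sg.
by rewrite /epath ne_sg (connect_trans sz) // connect1 // /esucc zf fg.
Qed.

Lemma in_out_esucc v h e : h \in in_edges v -> e \in out_edges v -> esucc h e.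
Proof. by rewrite !inE /esucc => /eqP -> /eqP ->. Qed.

Lemma boundary_tgt_out_edges e : boundary (tgt e) -> out_edges (tgt e) = set0.
Proof.
rewrite /boundary /degree => /eqP deg1.
have : 0 < #|in_edges (tgt e)| by apply/card_gt0P; exists e; rewrite inE.
by move=> in_pos; apply/eqP; rewrite -cards_eq0; apply/eqP; lia.
Qed.

Lemma output_edge_epathF o x : o \in output_edges -> ~~ epath o x.
Proof.
rewrite inE => bo; apply/negP => /andP[ne_ox /connect_neq_first/(_ ne_ox) [z oz _]].
have : z \in out_edges (tgt o) by rewrite inE eq_sym.
by rewrite boundary_tgt_out_edges // inE.
Qed.

Lemma internal_in_edges v :
  (forall u, is_source tgt u -> degree src tgt u = 1) -> internal v ->
  exists h, h \in in_edges v.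
Proof.
move=> src_deg iv; case: (set_0Vmem (in_edges v)) => [in0|[h hv]]; last by exists h.
by move: iv; rewrite /internal /boundary src_deg // /is_source in0 cards0.
Qed.

Lemma internal_out_edges v :
  (forall u, is_sink src u -> degree src tgt u = 1) -> internal v ->
  exists e, e \in out_edges v.
Proof.
move=> snk_deg iv; case: (set_0Vmem (out_edges v)) => [out0|[e ev]]; last by exists e.
by move: iv; rewrite /internal /boundary snk_deg // /is_sink out0 cards0.
Qed.

Section Acyclic.

Hypothesis acyc : acyclic src tgt.

Lemma acyclic_src_neq_tgt e : src e != tgt e.
Proof. by apply: contraTneq (acyc e) => ->; rewrite /Defs.vreach connect0. Qed.

Lemma in_out_epath v h e : h \in in_edges v -> e \in out_edges v -> epath h e.
Proof.
move=> hv ev; rewrite /epath connect1 ?(in_out_esucc hv ev) // andbT.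
apply: contraTneq hv => ->; move: ev; rewrite !inE => /eqP <-.
by rewrite eq_sym acyclic_src_neq_tgt.
Qed.

Variable v : V.
Hypothesis maxv : forall v', internal v' -> v' != v -> ~~ vreach v v'.

Lemma max_out_edges_sub : out_edges v \subset output_edges.
Proof.
apply/subsetP => e; rewrite !inE => /eqP ev; apply/negPn/negP => ie.
have ne_ev : tgt e != v by rewrite -ev eq_sym acyclic_src_neq_tgt.
have /negP[] := maxv ie ne_ev.
by apply: connect1; apply/existsP; exists e; rewrite ev !eqxx.
Qed.

Lemma max_epath_in_out h s : h \in in_edges v -> epath h s -> s \in out_edges v.
Proof.
move=> hv /andP[ne_hs /connect_neq_first/(_ ne_hs) [z hz zs]].
have zv : z \in out_edges v by move: hv; rewrite !inE -(eqP hz).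
case: (eqVneq z s) => [<- //|ne_zs].
have /negP[] := output_edge_epathF s (subsetP max_out_edges_sub z zv).
by rewrite /epath ne_zs.
Qed.

End Acyclic.

Section Planar.

Variable prec : rel E.
Hypothesis planar : planar_order src tgt prec.

Lemma planar_epath_between h m M s :
  epath h m -> epath h M -> src m = src M -> prec m s -> prec s M -> epath h s.
Proof.
case: planar => [[irr tr _] P1 P2] hm hM src_mM ms sM.
case: (P2 h s M (tr _ _ _ (P1 _ _ hm) ms) sM hM) => // sM'.
have ne_sm : s != m by apply: contraTneq ms => ->; rewrite irr.
have sm := epath_retarget sM' (esym src_mM) ne_sm.
by have := irr m; rewrite (tr _ _ _ ms (P1 _ _ sm)).
Qed.

Lemma planar_prec_sandwich h e o :
  epath h e -> ~~ epath h o -> ~~ epath o e ->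
  (prec o h = prec o e) /\ (prec h o = prec e o).
Proof.
case: planar => [[_ tr tot] P1 P2] he not_ho not_oe.
have ne_oh : o != h by apply: contraNneq not_oe => ->.
have ne_oe : o != e by apply: contraNneq not_ho => ->.
have between x : prec h x -> prec x e -> ~~ epath h x -> ~~ epath x e -> False.
  by move=> hx xe /negP hx' /negP xe'; case: (P2 _ _ _ hx xe he).
split; apply/idP/idP.
- by move=> oh; apply: tr oh (P1 _ _ he).
- by move=> oe; case/orP: (tot _ _ ne_oh) => // ho; case: (between o).
- by move=> ho; case/orP: (tot _ _ ne_oe) => // oe; case: (between o).
- by move=> eo; apply: tr (P1 _ _ he) eo.
Qed.

End Planar.

End POPGraph.

Theorem lemma3p4 (V E : finType) (src tgt : E -> V) (prec : rel E)
  (HG : progressive src tgt) (HP : planar_order src tgt prec)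
  (v : V) (Hv : internal src tgt v)
  (Hmax : forall v', internal src tgt v' -> v' != v -> ~~ vreach src tgt v v') :
  [/\ out_edges src v \subset output_edges src tgt,
      is_interval_in prec [set: E] (out_edges src v),
      is_interval_in prec (output_edges src tgt) (out_edges src v) &
      exists m M, [/\ m \in out_edges src v, M \in out_edges src v,
        (forall e, e \in out_edges src v -> pleq prec m e && pleq prec e M) &
        (forall h o, h \in in_edges tgt v ->
           o \in output_edges src tgt :\: out_edges src v ->
           (prec o h = prec o m) /\ (prec h o = prec M o))]].
Proof.
case: HG => acyc src_deg snk_deg.
have [h0 h0v] := internal_in_edges src_deg Hv.
have [e0 e0v] := internal_out_edges snk_deg Hv.
have lin : strict_linear prec by case: HP.
have [m mv min_m] := strict_linear_min lin e0v.
have [M Mv max_M] := strict_linear_max lin e0v.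
have out_sub := max_out_edges_sub acyc Hmax.
have out_interval s : s \in out_edges src v <-> pleq prec m s && pleq prec s M.
  split=> [sv | ]; first by rewrite min_m ?max_M.
  rewrite /pleq; case: eqVneq => [<- //| _]; case: eqVneq => [-> //| _] /= /andP[ms sM].
  have src_mM : src m = src M by move: mv Mv; rewrite !inE => /eqP -> /eqP ->.
  apply: (max_epath_in_out acyc Hmax h0v).
  exact: (planar_epath_between HP (in_out_epath acyc h0v mv)
                               (in_out_epath acyc h0v Mv) src_mM ms sM).
split=> //.
- by exists m, M; split=> // s _; apply: out_interval.
- by exists m, M; split=> [||s _]; [apply: (subsetP out_sub)..| apply: out_interval].
exists m, M; split=> // [e ev | h o hv]; first by rewrite min_m ?max_M.
rewrite in_setD => /andP[ov oG].
have not_ho : ~~ epath src tgt h o by apply: contra ov; apply: max_epath_in_out hv.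
have o_no_epath := output_edge_epathF _ oG.
have [oh_om _] := planar_prec_sandwich HP (in_out_epath acyc hv mv) not_ho (o_no_epath m).
have [_ ho_Mo] := planar_prec_sandwich HP (in_out_epath acyc hv Mv) not_ho (o_no_epath M).
by split.
Qed.
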